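(* Let $S_0$ be the initial state of a $d$-dimensional Hegselmann–Krause system with social network $G=(V,E)$, $n=|V|$ agents and confidence bound $\varepsilon>0$, evolving under uniform random asynchronous updates, and let $\delta>0$. Then the expected convergence time to a $\delta$-stable state is $\operatorname{O}(\Phi(S_0)\, n|E|/\delta^2)$, and this is at most $\operatorname{O}\big(n|E|^2(\varepsilon/\delta)^2\big)$.
   Context: A $d$-dimensional Hegselmann–Krause system (HKS) consists of a finite undirected graph $G=(V,E)$ (the social network) whose $n=|V|$ nodes are agents, a confidence bound $\varepsilon>0$, and initial opinions (positions) $x_v(0)\in\mathbb{R}^d$ for $v\in V$. A state is an assignment of positions $x_v\in\mathbb{R}^d$ to the agents. In a state, the influencing neighborhood of $v$ is $N_v=\{u\in V:\{u,v\}\in E,\ \|x_u-x_v\|_2\le\varepsilon\}\cup\{v\}$. The influence network is the graph $(V,E_I)$ with $E_I=\{\{u,v\}\in E:\|x_u-x_v\|_2\le\varepsilon\}$, and the length of an edge $\{u,v\}$ is $\|x_u-x_v\|_2$. Uniform random asynchronous updates: at each step $t=0,1,2,\dots$ one agent $v$ is chosen uniformly at random (independently of the past) and its position becomes $x_v(t+1)=\frac{1}{|N_v(t)|}\sum_{u\in N_v(t)}x_u(t)$, while all other agents keep their positions. A state is $\delta$-stable if every edge of the influence network has length at most $\delta$. The convergence time is the number of steps until a $\delta$-stable state is reached for the first time. The potential of a state $S$ is $\Phi(S)=\sum_{\{u,v\}\in E}\min\{\|x_u-x_v\|_2^2,\varepsilon^2\}$. The constants in the $\operatorname{O}$-notation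 are absolute (independent of $G$, $d$, $\varepsilon$, $\delta$ and the initial state). *)

From mathcomp Require Import all_boot all_order all_algebra.
Set Implicit Arguments. Unset Strict Implicit. Unset Printing Implicit Defensive.
Import Order.TTheory GRing.Theory Num.Theory.
Local Open Scope ring_scope.

Section HKS.
Variables (R : realFieldType) (V : finType) (d : nat).
Variable (E : rel V).
Variable (eps : R).

Definition state := V -> 'rV[R]_d.

Definition sqdist (a b : 'rV[R]_d) : R := \sum_(i < d) (a 0 i - b 0 i) ^+ 2.

Definition nbhd (x : state) (v : V) : {set V} :=
  [set u | (u == v) || (E u v && (sqdist (x u) (x v) <= eps ^+ 2))].

Definition step (x : state) (v : V) : state :=
  fun w => if w == v then (#|nbhd x v|%:R)^-1 *: \sum_(u in nbhd x v) x u
           else x w.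

Definition run (x0 : state) (s : seq V) : state := foldl step x0 s.

Definition stable (delta : R) (x : state) : bool :=
  [forall u, forall v, (E u v && (sqdist (x u) (x v) <= eps ^+ 2))
                        ==> (sqdist (x u) (x v) <= delta ^+ 2)].

Definition nedges : R := (#|[set p : V * V | E p.1 p.2]|%:R) / 2.

(* potential: each undirected edge counted once (ordered pairs / 2) *)
Definition potential (x : state) : R :=
  (\sum_(p : V * V | E p.1 p.2) Num.min (sqdist (x p.1) (x p.2)) (eps ^+ 2)) / 2.

(* Prob[convergence time T > t] under uniform random independent choices:
   the first t choices form a uniform t-tuple of agents, and T > t iff none of
   the states S_0, ..., S_t is delta-stable. *)
Definition prob_T_gt (delta : R) (x0 : state) (t : nat) : R :=
  (#|[set s : t.-tuple V |
       [forall k : 'I_t.+1, ~~ stable delta (run x0 (take k s))]]|%:R)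
  / (#|V|%:R ^+ t).

(* E[T] = sum_{t>=0} P(T > t); partial sums of this nonnegative series *)
Definition expected_time_partial (delta : R) (x0 : state) (N : nat) : R :=
  \sum_(t < N) prob_T_gt delta x0 t.

End HKS.

Arguments sqdist {R d}.
Arguments nbhd {R V d}.
Arguments step {R V d}.
Arguments run {R V d}.
Arguments stable {R V d}.
Arguments nedges {R V}.
Arguments potential {R V d}.
Arguments prob_T_gt {R V d}.
Arguments expected_time_partial {R V d}.

From mathcomp Require Import all_boot all_order all_algebra.
From mathcomp Require Import ring lra.
Import Order.TTheory GRing.Theory Num.Theory.
Set Implicit Arguments. Unset Strict Implicit. Unset Printing Implicit Defensive.
Local Open Scope ring_scope.

(* Updating agent v moves it to the barycentre of its influencing
   neighbourhood N_v.  Since the potential truncates edge lengths at eps^2, only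
   the edges inside N_v can become longer, and the barycentre minimises the sum of
   squared distances to N_v; hence the potential drops by at least
   |N_v| * |x_v' - x_v|^2.  If the state is not delta-stable, some influence edge uw
   has squared length D > delta^2.  Projecting all positions onto x_w - x_u, the
   agents lying beyond w form an upper set that the edge wu leaves, so their
   drifts sum to at least D along that direction; Cauchy-Schwarz, with degree
   weights, turns this into a total potential drop of at least delta^2 / (4|E|)
   over all n possible updates.  While the system is unstable a uniformly random
   step therefore lowers the expected potential by delta^2 / (4 n |E|), and a
   first-step recursion on the survival probabilities gives
   E[T] <= 4 n |E| Phi(S_0) / delta^2.  Finally Phi <= |E| eps^2. *)

Section SumInequalities.
Variables (R : realFieldType) (I : finType).

Lemma sqr_le0 (a : R) : (a ^+ 2 <= 0) = (a == 0).
Proof. by rewrite -sqrf_eq0 eq_le sqr_ge0 andbT. Qed.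

Lemma mul2_le_quad (a w b t : R) : 0 <= w -> 0 <= b -> a ^+ 2 <= w * b ->
  2 * a * t <= w * t ^+ 2 + b.
Proof.
move=> w0 b0 hab; have [w_eq0|wN0] := eqVneq w 0.
  rewrite w_eq0 mul0r sqr_le0 in hab.
  by rewrite w_eq0 (eqP hab) !(mulr0, mul0r) add0r.
have wp : 0 < w by rewrite lt_def wN0.
rewrite -subr_ge0 -(pmulr_rge0 _ wp).
have -> : w * (w * t ^+ 2 + b - 2 * a * t) = (w * t - a) ^+ 2 + (w * b - a ^+ 2).
  by ring.
by rewrite addr_ge0 ?sqr_ge0 ?subr_ge0.
Qed.

Lemma sqr_sum_le (a w b : I -> R) :
  (forall i, 0 <= w i) -> (forall i, 0 <= b i) -> (forall i, a i ^+ 2 <= w i * b i) ->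
  (\sum_i a i) ^+ 2 <= (\sum_i w i) * (\sum_i b i).
Proof.
move=> w0 b0 hab.
set A := \sum_i a i; set W := \sum_i w i; set B := \sum_i b i.
have quad t : 2 * A * t <= W * t ^+ 2 + B.
  rewrite mulr_sumr !mulr_suml -big_split /=.
  by apply: ler_sum => i _; apply: mul2_le_quad.
have [W_eq0|WN0] := eqVneq W 0.
  have w_eq0 i : w i = 0 by apply: (psumr_eq0P _ W_eq0).
  have -> : A = 0.
    by rewrite /A big1 // => i _; apply/eqP; rewrite -sqr_le0 -(mul0r (b i)) -(w_eq0 i).
  by rewrite W_eq0 expr0n mul0r.
have Wp : 0 < W by rewrite lt_def WN0 sumr_ge0.
have := quad (A / W).
have -> : W * (A / W) ^+ 2 = A ^+ 2 / W by field.
have -> : 2 * A * (A / W) = 2 * (A ^+ 2 / W) by ring.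
rewrite -subr_ge0 (_ : _ - _ = B - A ^+ 2 / W); last by ring.
by rewrite subr_ge0 ler_pdivrMr // mulrC.
Qed.

Lemma sqr_sum_mul_le (f g : I -> R) :
  (\sum_i f i * g i) ^+ 2 <= (\sum_i f i ^+ 2) * (\sum_i g i ^+ 2).
Proof. by apply: sqr_sum_le => i; rewrite ?sqr_ge0 // exprMn. Qed.

Lemma sum_antisym (g : I -> I -> R) : (forall i j, g j i = - g i j) ->
  \sum_i \sum_j g i j = 0.
Proof.
move=> g_anti; have e : \sum_i \sum_j g i j = - \sum_i \sum_j g i j.
  rewrite {1}exchange_big -sumrN; apply: eq_bigr => j _.
  by rewrite -sumrN; apply: eq_bigr => i _; rewrite g_anti.
lra.
Qed.

End SumInequalities.

Lemma sum_tuple_cons (R : nmodType) (T : finType) n (F : n.+1.-tuple T -> R) :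
  \sum_s F s = \sum_a \sum_(s : n.-tuple T) F [tuple of a :: s].
Proof.
rewrite pair_bigA /= (reindex (fun p : T * n.-tuple T => [tuple of p.1 :: p.2])) //.
apply: onW_bij; exists (fun s => (thead s, [tuple of behead s])).
  by move=> [a s]; rewrite theadE; congr pair; apply: val_inj.
by move=> s; rewrite -tuple_eta.
Qed.

Section UpperSetFlow.
Variables (R : realFieldType) (V : finType) (N : V -> {set V}) (f : V -> R).
Hypothesis N_sym : forall y z, (y \in N z) = (z \in N y).

Lemma upper_set_flow_le (c : R) (w u : V) : c <= f w -> f u < c -> u \in N w ->
  \sum_(z | c <= f z) \sum_(y in N z) (f y - f z) <= f u - f w.
Proof.
move=> cw uc uNw.
(* Flow between two agents of the upper set cancels; the outflow is nonpositive
   termwise and contains the term of the edge wu. *)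
pose flow (A : V -> bool) z y :=
  if [&& c <= f z, A y & y \in N z] then f y - f z else 0.
pose internal := flow (fun y => c <= f y); pose outgoing := flow (fun y => f y < c).
have -> : \sum_(z | c <= f z) \sum_(y in N z) (f y - f z)
    = \sum_z \sum_y internal z y + \sum_z \sum_y outgoing z y.
  rewrite big_mkcond -big_split /=; apply: eq_bigr => z _.
  rewrite /internal /outgoing /flow -big_split.
  case: (c <= f z) => /=; last by rewrite big1 // => y _; rewrite addr0.
  rewrite [LHS]big_mkcond; apply: eq_bigr => y _.
  by case: (leP c (f y)); case: (y \in N z); rewrite /= ?addr0 ?add0r.
have internal0 : \sum_z \sum_y internal z y = 0.
  apply: sum_antisym => z y; rewrite /internal /flow N_sym.
  by case: (c <= f z); case: (c <= f y); case: (y \in N z); rewrite /= ?oppr0 ?opprB.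
have outgoing_le0 z y : outgoing z y <= 0.
  rewrite /outgoing /flow; case: (leP c (f z)) => //= cz; case: (ltP (f y) c) => //= yc.
  by case: (y \in N z) => //=; rewrite subr_le0 ltW // (lt_le_trans yc cz).
have outgoing_wu : outgoing w u = f u - f w by rewrite /outgoing /flow cw uc uNw.
rewrite internal0 add0r (bigD1 w) //= (bigD1 u) //= outgoing_wu.
have rest_w : \sum_(y | y != u) outgoing w y <= 0 by exact: sumr_le0.
have rest : \sum_(z | z != w) \sum_y outgoing z y <= 0.
  by apply: sumr_le0 => z _; exact: sumr_le0.
lra.
Qed.

End UpperSetFlow.

Section SquaredDistance.
Variables (R : realFieldType) (d : nat).
Implicit Types a b : 'rV[R]_d.

Lemma sqdistC a b : sqdist a b = sqdist b a.
Proof. by apply: eq_bigr => i _; rewrite -sqrrN opprB. Qed.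

Lemma sqdist_ge0 a b : 0 <= sqdist a b.
Proof. by apply: sumr_ge0 => i _; rewrite sqr_ge0. Qed.

Lemma sqdistxx a : sqdist a a = 0.
Proof. by apply: big1 => i _; rewrite subrr expr0n. Qed.

End SquaredDistance.

Section HegselmannKrause.
Variables (R : realFieldType) (V : finType) (d : nat) (E : rel V) (eps : R).
Hypotheses (E_sym : symmetric E) (E_irr : irreflexive E).
Implicit Types (x y : state R V d) (u v w z : V).

Lemma nbhd_sym x u v : (u \in nbhd E eps x v) = (v \in nbhd E eps x u).
Proof. by rewrite !inE eq_sym E_sym sqdistC. Qed.

Lemma nbhd_self x v : v \in nbhd E eps x v.
Proof. by rewrite inE eqxx. Qed.

Lemma card_nbhd_gt0 x v : 0 < #|nbhd E eps x v|%:R :> R.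
Proof. by rewrite ltr0n card_gt0; apply/set0Pn; exists v; apply: nbhd_self. Qed.

Definition drift x v (i : 'I_d) : R :=
  \sum_(u in nbhd E eps x v) (x u 0 i - x v 0 i).

(* Equal to |N_v| * |x_v' - x_v|^2, where x_v' is the updated position. *)
Definition step_gain x v : R :=
  (\sum_i drift x v i ^+ 2) / #|nbhd E eps x v|%:R.

Lemma step_gain_ge0 x v : 0 <= step_gain x v.
Proof. by rewrite divr_ge0 ?ler0n // sumr_ge0 // => i _; rewrite sqr_ge0. Qed.

Lemma step_self_coord x v i :
  step E eps x v v 0 i = x v 0 i + drift x v i / #|nbhd E eps x v|%:R.
Proof.
rewrite /step eqxx mxE summxE /drift sumrB sumr_const -mulr_natl.
by field; rewrite gt_eqF ?card_nbhd_gt0.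
Qed.

Lemma step_other x v w : w != v -> step E eps x v w = x w.
Proof. by rewrite /step => /negbTE ->. Qed.

Lemma sum_sqdist_step x v :
  \sum_(b in nbhd E eps x v)
     (sqdist (step E eps x v v) (x b) - sqdist (x v) (x b)) = - step_gain x v.
Proof.
rewrite /step_gain /sqdist; set n := #|_|%:R; have n_gt0 : 0 < n := card_nbhd_gt0 x v.
under eq_bigr => b _ do rewrite -sumrB.
rewrite exchange_big -mulNr -sumrN mulr_suml; apply: eq_bigr => i _.
rewrite step_self_coord -/n; set c := drift x v i / n.
transitivity (\sum_(b in nbhd E eps x v) (c ^+ 2 - 2 * c * (x b 0 i - x v 0 i))).
  by apply: eq_bigr => b _; ring.
rewrite sumrB sumr_const -mulr_sumr -/(drift x v i) -mulr_natl -/n /c.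
by field; rewrite gt_eqF.
Qed.

Definition edge_pot x a b : R :=
  if E a b then Num.min (sqdist (x a) (x b)) (eps ^+ 2) else 0.

Lemma potentialE x : potential E eps x = (\sum_a \sum_b edge_pot x a b) / 2.
Proof. by rewrite /potential pair_bigA big_mkcond. Qed.

Lemma potential_update x y v : (forall w, w != v -> y w = x w) ->
  potential E eps y - potential E eps x
  = \sum_b (edge_pot y v b - edge_pot x v b).
Proof.
move=> yx; set h := fun a b => edge_pot y a b - edge_pot x a b.
have h_off a b : a != v -> b != v -> h a b = 0.
  by move=> av bv; rewrite /h /edge_pot !yx // subrr.
have h_sym a : h a v = h v a.
  by rewrite /h /edge_pot E_sym sqdistC (sqdistC (x a)).
have h_vv : h v v = 0 by rewrite /h /edge_pot E_irr subrr.
have col_v : \sum_(a | a != v) \sum_b h a b = \sum_b h v b.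
  rewrite [RHS](bigD1 v) //= h_vv add0r; apply: eq_bigr => a av.
  by rewrite (bigD1 v) //= big1 ?addr0 ?h_sym // => b; exact: h_off.
rewrite !potentialE -mulrBl -sumrB.
under eq_bigr => a _ do rewrite -sumrB.
by rewrite (bigD1 v) //= col_v; field.
Qed.

Lemma edge_pot_update_le x y v b : (forall w, w != v -> y w = x w) ->
  edge_pot y v b - edge_pot x v b
  <= if b \in nbhd E eps x v then sqdist (y v) (x b) - sqdist (x v) (x b) else 0.
Proof.
move=> yx; have [->|bv] := eqVneq b v.
  by rewrite nbhd_self /edge_pot E_irr subrr sqdistxx subr0 sqdist_ge0.
rewrite /edge_pot (yx b bv) inE (negbTE bv) (E_sym b v) /=.
case: (E v b) => /=; last by rewrite subrr.
rewrite (sqdistC (x b) (x v)).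
have min_y : Num.min (sqdist (y v) (x b)) (eps ^+ 2) <= sqdist (y v) (x b).
  by rewrite ge_min lexx.
have min_eps : Num.min (sqdist (y v) (x b)) (eps ^+ 2) <= eps ^+ 2.
  by rewrite ge_min lexx orbT.
by case: (leP (sqdist (x v) (x b)) (eps ^+ 2)) => _; rewrite ?lerD2r ?subr_le0.
Qed.

Lemma potential_step_le x v :
  potential E eps (step E eps x v) <= potential E eps x - step_gain x v.
Proof.
have diff_le : \sum_b (edge_pot (step E eps x v) v b - edge_pot x v b)
    <= \sum_(b in nbhd E eps x v)
         (sqdist (step E eps x v v) (x b) - sqdist (x v) (x b)).
  rewrite [X in _ <= X]big_mkcond; apply: ler_sum => b _.
  by apply: edge_pot_update_le; exact: step_other.
have := potential_update (@step_other x v); have := sum_sqdist_step x v; lra.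
Qed.

Definition degree z : R := #|[set y | E z y]|%:R.

Lemma sum_degree : \sum_z degree z = 2 * nedges E.
Proof.
rewrite /nedges mulrC divfK ?pnatr_eq0 // -natr_sum; congr (_%:R).
rewrite -sum1dep_card; under eq_bigr => z _ do rewrite -sum1dep_card.
by rewrite pair_big_dep.
Qed.

Lemma card_nbhd_le x z : (#|nbhd E eps x z| <= 1 + #|[set y | E z y]|)%N.
Proof.
apply: leq_trans (_ : #|z |: [set y | E z y]| <= _)%N; last first.
  by rewrite cardsU1 leq_add2r leq_b1.
apply: subset_leq_card; apply/subsetP => y.
by rewrite !inE => /orP [->|/andP [Eyz _]] //; rewrite E_sym Eyz orbT.
Qed.

Lemma sum_drift_sqr_le x z : \sum_i drift x z i ^+ 2 <= 2 * degree z * step_gain x z.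
Proof.
have [deg0|degN0] := eqVneq (degree z) 0.
  move/eqP: deg0; rewrite /degree pnatr_eq0 cards_eq0 => /eqP no_edge.
  rewrite big1; first by rewrite mulr_ge0 ?step_gain_ge0 // mulr_ge0 // ler0n.
  move=> i _; rewrite /drift big1 ?expr0n // => y.
  rewrite inE => /orP [/eqP ->|/andP [Eyz _]]; first by rewrite subrr.
  by have := in_set0 y; rewrite -no_edge inE E_sym Eyz.
have n_gt0 := card_nbhd_gt0 x z.
have n_le : #|nbhd E eps x z|%:R <= 2 * degree z.
  have deg_ge1 : 1 <= degree z by rewrite ler1n lt0n -(pnatr_eq0 R).
  apply: le_trans (_ : (1 + #|[set y | E z y]|)%:R <= _).
    by rewrite ler_nat card_nbhd_le.
  rewrite natrD -/(degree z); lra.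
rewrite /step_gain; set S := \sum_i _.
have -> : 2 * degree z * (S / #|nbhd E eps x z|%:R)
          = S * (2 * degree z / #|nbhd E eps x z|%:R) by ring.
apply: ler_peMr; first by rewrite sumr_ge0 // => i _; rewrite sqr_ge0.
by rewrite ler_pdivlMr // mul1r.
Qed.

Lemma drift_dot x z (e : 'I_d -> R) :
  \sum_i drift x z i * e i
  = \sum_(y in nbhd E eps x z) (\sum_i x y 0 i * e i - \sum_i x z 0 i * e i).
Proof.
under eq_bigr => i _ do rewrite /drift mulr_suml.
rewrite exchange_big; apply: eq_bigr => y _.
by rewrite -sumrB; apply: eq_bigr => i _; rewrite mulrBl.
Qed.

Lemma unstable_sum_step_gain_ge delta x : ~~ stable E eps delta x ->
  delta ^+ 2 <= 4 * nedges E * \sum_v step_gain x v.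
Proof.
move=> /forallPn [u /forallPn [w]]; rewrite negb_imply => /andP [/andP [Euw near]].
rewrite -ltNge => far; set D := sqdist (x u) (x w) in near far.
have D_gt0 : 0 < D by apply: le_lt_trans far; rewrite sqr_ge0.
pose e i := x w 0 i - x u 0 i.
pose f z := \sum_i x z 0 i * e i.
have sum_e2 : \sum_i e i ^+ 2 = D by rewrite /D sqdistC.
have fwu : f w - f u = D.
  by rewrite -sum_e2 -sumrB; apply: eq_bigr => i _; rewrite /e; ring.
pose up z := f w <= f z.
pose a z := if up z then \sum_i drift x z i * e i else 0.
(* Degree weights, rather than |N_z|, keep the total weight within 4|E| even in
   the presence of isolated agents. *)
pose wt z := if up z then 2 * degree z else 0.
have wt_ge0 z : 0 <= wt z by rewrite /wt; case: ifP; rewrite ?mulr_ge0 ?ler0n.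
have a_sqr_le z : a z ^+ 2 <= wt z * (D * step_gain x z).
  rewrite /a /wt; case: ifP => _; last by rewrite expr0n mul0r.
  apply: le_trans (sqr_sum_mul_le _ _) _; rewrite sum_e2 mulrCA mulrC.
  by apply: ler_wpM2l; [exact: ltW | exact: sum_drift_sqr_le].
have flow_le : \sum_z a z <= - D.
  rewrite /a -big_mkcond /=; under eq_bigr do rewrite drift_dot.
  have u_near_w : u \in nbhd E eps x w by rewrite inE Euw -/D near orbT.
  have fu_lt : f u < f w by rewrite -subr_gt0 fwu.
  rewrite -fwu opprB.
  exact: (upper_set_flow_le (f := f) (nbhd_sym x) (lexx (f w)) fu_lt u_near_w).
have wt_le : \sum_z wt z <= 4 * nedges E.
  rewrite (_ : 4 * _ = 2 * (2 * nedges E)); last by ring.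
  rewrite -sum_degree mulr_sumr.
  by apply: ler_sum => z _; rewrite /wt; case: ifP; rewrite ?mulr_ge0 ?ler0n.
have gain_ge0 z : 0 <= D * step_gain x z.
  exact: mulr_ge0 (ltW D_gt0) (step_gain_ge0 x z).
have CS := sqr_sum_le wt_ge0 gain_ge0 a_sqr_le.
rewrite -mulr_sumr in CS.
have DD : D * D <= (\sum_z a z) ^+ 2 by rewrite -sqrrN expr2 ler_pM //; lra.
have : D * D <= D * (4 * nedges E * \sum_v step_gain x v).
  rewrite mulrCA; apply: le_trans DD (le_trans CS _); apply: ler_wpM2r => //.
  by rewrite mulr_ge0 ?(ltW D_gt0) // sumr_ge0 // => v _; apply: step_gain_ge0.
rewrite ler_pM2l //; lra.
Qed.

Lemma potential_ge0 x : 0 <= potential E eps x.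
Proof.
rewrite /potential divr_ge0 // sumr_ge0 // => p _.
by rewrite le_min sqdist_ge0 sqr_ge0.
Qed.

Lemma potential_le_nedges x : potential E eps x <= nedges E * eps ^+ 2.
Proof.
rewrite /potential /nedges mulrAC ler_pM2r ?invr_gt0 //.
rewrite -sum1dep_card natr_sum mulr_suml.
by apply: ler_sum => p _; rewrite mul1r ge_min lexx orbT.
Qed.

End HegselmannKrause.

Section ExpectedTime.
Variables (R : realFieldType) (V : finType) (d : nat) (E : rel V) (eps delta : R).
Implicit Types (x : state R V d) (v : V).

Definition survives t x (s : t.-tuple V) : bool :=
  [forall k : 'I_t.+1, ~~ stable E eps delta (run E eps x (take k s))].

Lemma survives_cons t x v (s : t.-tuple V) :
  survives x [tuple of v :: s]
  = ~~ stable E eps delta x && survives (step E eps x v) s.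
Proof.
apply/forallP/andP => [surv | [x_unstable surv] k].
  split; first exact: (surv ord0).
  by apply/forallP => k; have := surv (lift ord0 k); rewrite lift0.
case: (unliftP ord0 k) => [j ->|->]; last exact: x_unstable.
by rewrite lift0; exact: (forallP surv j).
Qed.

Lemma prob_T_gtE x t :
  prob_T_gt E eps delta x t = (\sum_(s : t.-tuple V) (survives x s)%:R) / #|V|%:R ^+ t.
Proof.
congr (_ / _); rewrite -sum1dep_card natr_sum big_mkcond.
by apply: eq_bigr => s _; rewrite /survives; case: ifP.
Qed.

Lemma prob_T_gt0 x : prob_T_gt E eps delta x 0 = (~~ stable E eps delta x)%:R.
Proof.
rewrite prob_T_gtE expr0 divr1 (eq_bigr (fun _ => (~~ stable E eps delta x)%:R)).
  by rewrite sumr_const card_tuple expn0.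
move=> s _; rewrite (tuple0 s); congr ((nat_of_bool _)%:R).
by apply/forallP/idP => [/(_ ord0)|? [[|//] ?]].
Qed.

Lemma prob_T_gtS x t :
  prob_T_gt E eps delta x t.+1
  = (~~ stable E eps delta x)%:R
    * (#|V|%:R^-1 * \sum_v prob_T_gt E eps delta (step E eps x v) t).
Proof.
rewrite prob_T_gtE sum_tuple_cons.
under eq_bigr => v _ do under eq_bigr => s _ do rewrite survives_cons -mulnb natrM.
under eq_bigr => v _ do rewrite -mulr_sumr.
rewrite -mulr_sumr -mulrA; congr (_ * _).
rewrite exprS invfM mulr_suml mulr_sumr; apply: eq_bigr => v _.
by rewrite prob_T_gtE mulrCA mulrA.
Qed.

Lemma expected_time_partialS x N :
  expected_time_partial E eps delta x N.+1
  = (~~ stable E eps delta x)%:R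
    * (1 + #|V|%:R^-1 * \sum_v expected_time_partial E eps delta (step E eps x v) N).
Proof.
rewrite /expected_time_partial big_ord_recl prob_T_gt0 mulrDr mulr1; congr (_ + _).
under eq_bigr => t _ do rewrite lift0 prob_T_gtS.
by rewrite -mulr_sumr -mulr_sumr exchange_big.
Qed.

Hypotheses (E_sym : symmetric E) (E_irr : irreflexive E) (delta_gt0 : 0 < delta).

Lemma expected_time_partial_le x N :
  expected_time_partial E eps delta x N
  <= 4 * #|V|%:R * nedges E / delta ^+ 2 * potential E eps x.
Proof.
set n : R := #|V|%:R; set K := 4 * n * nedges E / delta ^+ 2.
have K_ge0 : 0 <= K.
  by rewrite /K /nedges !mulr_ge0 ?invr_ge0 ?ler0n ?sqr_ge0.
elim: N x => [|N IH] x.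
  by rewrite /expected_time_partial big_ord0 mulr_ge0 ?potential_ge0.
rewrite expected_time_partialS; case: (boolP (stable E eps delta x)) => [_|unstable].
  by rewrite mul0r mulr_ge0 ?potential_ge0.
have n_gt0 : 0 < n.
  by move: unstable => /forallPn [u _]; rewrite ltr0n; apply/card_gt0P; exists u.
set S := \sum_v step_gain E eps x v.
have next_le : \sum_v expected_time_partial E eps delta (step E eps x v) N
               <= K * (n * potential E eps x - S).
  apply: le_trans (_ : \sum_v K * potential E eps (step E eps x v) <= _).
    by apply: ler_sum => v _; exact: IH.
  rewrite -mulr_sumr ler_wpM2l //.
  apply: le_trans (_ : \sum_v (potential E eps x - step_gain E eps x v) <= _).
    by apply: ler_sum => v _; exact: potential_step_le.
  by rewrite sumrB sumr_const -mulr_natl.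
have S_ge : 1 <= 4 * nedges E * S / delta ^+ 2.
  by rewrite ler_pdivlMr ?exprn_gt0 // mul1r; exact: unstable_sum_step_gain_ge.
have : n^-1 * \sum_v expected_time_partial E eps delta (step E eps x v) N
       <= K * potential E eps x - 4 * nedges E * S / delta ^+ 2.
  apply: le_trans (ler_wpM2l _ next_le) _; first by rewrite invr_ge0 ltW.
  by rewrite /K le_eqVlt; apply/orP; left; apply/eqP; field; rewrite !gt_eqF ?exprn_gt0.
rewrite mul1r; lra.
Qed.

End ExpectedTime.

Theorem theorem1 :
  exists C : nat,
  forall (R : realFieldType) (V : finType) (d : nat) (E : rel V)
         (eps delta : R) (x0 : V -> 'rV[R]_d),
    symmetric E -> irreflexive E ->
    0 < eps -> 0 < delta ->
    (forall N : nat,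
       expected_time_partial E eps delta x0 N
         <= C%:R * (potential E eps x0 * #|V|%:R * nedges E / delta ^+ 2))
    /\
    potential E eps x0 * #|V|%:R * nedges E / delta ^+ 2
      <= C%:R * (#|V|%:R * nedges E ^+ 2 * (eps / delta) ^+ 2).
Proof.
exists 4%N => R V d E eps delta x0 E_sym E_irr _ delta_gt0.
split=> [N|].
  apply: le_trans (expected_time_partial_le eps E_sym E_irr delta_gt0 x0 N) _.
  by rewrite le_eqVlt; apply/orP; left; apply/eqP; ring.
set P := potential E eps x0; set n : R := #|V|%:R; set m := nedges E.
set M := n * m / delta ^+ 2.
have M_ge0 : 0 <= M by rewrite !mulr_ge0 ?invr_ge0 ?ler0n ?sqr_ge0.
have -> : P * n * m / delta ^+ 2 = P * M by rewrite /M; ring.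
have -> : n * m ^+ 2 * (eps / delta) ^+ 2 = m * eps ^+ 2 * M.
  by rewrite /M; field; rewrite gt_eqF.
apply: le_trans (ler_wpM2r M_ge0 (potential_le_nedges E eps x0)) _.
apply: ler_peMl; last by rewrite ler1n.
by rewrite mulr_ge0 // (le_trans (potential_ge0 E eps x0)) ?potential_le_nedges.
Qed.
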